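(* Let $f\colon X\to X$ be a homeomorphism of a compact metric space $(X,d)$ with the shadowing property. For every $\epsilon>0$ there is $\delta>0$ such that: if $x\in\Omega(f)$, $y\in X$ and $n>0$ satisfy $\epsilon<\gamma:=\max\{d(f^k(x),f^k(y)):0\le k<n\}$ and $\max\{d(x,y),d(f^n(x),f^n(y))\}<\delta$, then there exist $N\ge1$ and a compact set $K\subset X$ with $\sup_{k\in\mathbb{Z}}\operatorname{diam}(f^k(K))\le2\gamma$, $f^N(K)=K$, and $f^N|_K$ semi-conjugate to the full shift on two symbols. In particular $K$ is uncountable and the topological entropy of $f^N|_K$ is at least $\log 2$.
   Context: Shadowing: for every $\varepsilon>0$ there is $\delta>0$ such that for every sequence $(x_k)_{k\in\mathbb{Z}}$ with $d(f(x_k),x_{k+1})<\delta$ for all $k$ there is $y$ with $d(f^k(y),x_k)<\varepsilon$ for all $k\in\mathbb{Z}$. $\Omega(f)$ is the set of non-wandering points: $x$ such that for every open $U\ni x$ there is $k>0$ with $f^k(U)\cap U\ne\emptyset$. $g\colon K\to K$ is semi-conjugate to the full shift $\sigma$ on $\{0,1\}^{\mathbb{Z}}$ if there is a continuous surjection $h\colon K\to\{0,1\}^{\mathbb{Z}}$ with $h\circ g=\sigma\circ h$. *)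

From Stdlib Require Import Reals Lra ZArith List.
Open Scope R_scope.

Definition is_metric {X : Type} (d : X -> X -> R) : Prop :=
  (forall x y, 0 <= d x y) /\
  (forall x y, d x y = 0 <-> x = y) /\
  (forall x y, d x y = d y x) /\
  (forall x y z, d x z <= d x y + d y z).

Definition is_open {X : Type} (d : X -> X -> R) (U : X -> Prop) : Prop :=
  forall x, U x -> exists r, 0 < r /\ forall y, d x y < r -> U y.

Definition compact_set {X : Type} (d : X -> X -> R) (K : X -> Prop) : Prop :=
  forall (I : Type) (U : I -> X -> Prop),
    (forall i, is_open d (U i)) ->
    (forall x, K x -> exists i, U i x) ->
    exists l : list I, forall x, K x -> exists i, In i l /\ U i x.

Definition compact_space {X : Type} (d : X -> X -> R) : Prop :=
  compact_set d (fun _ => True).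

Definition continuous {X : Type} (d : X -> X -> R) (f : X -> X) : Prop :=
  forall x eps, 0 < eps -> exists del, 0 < del /\
    forall y, d x y < del -> d (f x) (f y) < eps.

Definition homeo_with_inverse {X : Type} (d : X -> X -> R) (f g : X -> X) : Prop :=
  continuous d f /\ continuous d g /\
  (forall x, g (f x) = x) /\ (forall x, f (g x) = x).

(* integer iterates f^k, k in Z, where g = f^{-1} *)
Definition zpow {X : Type} (f g : X -> X) (k : Z) : X -> X :=
  match k with
  | Z0 => fun x => x
  | Zpos p => Nat.iter (Pos.to_nat p) f
  | Zneg p => Nat.iter (Pos.to_nat p) g
  end.

Definition shadowing {X : Type} (d : X -> X -> R) (f g : X -> X) : Prop :=
  forall eps, 0 < eps -> exists del, 0 < del /\
    forall xs : Z -> X,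
      (forall k, d (f (xs k)) (xs (k + 1)%Z) < del) ->
      exists y, forall k, d (zpow f g k y) (xs k) < eps.

Definition nonwandering {X : Type} (d : X -> X -> R) (f : X -> X) (x : X) : Prop :=
  forall U, is_open d U -> U x ->
    exists k : nat, (0 < k)%nat /\ exists z, U z /\ U (Nat.iter k f z).

Definition shift (s : Z -> bool) : Z -> bool := fun i => s (i + 1)%Z.

(* F|_K (with F(K)=K) is semi-conjugate to the full shift: continuous surjection
   h : K -> {0,1}^Z (product topology, i.e. each coordinate locally constant)
   with h o F = shift o h on K *)
Definition semiconj_full_shift {X : Type} (d : X -> X -> R) (F : X -> X)
  (K : X -> Prop) : Prop :=
  exists h : X -> Z -> bool,
    (forall w i, K w -> exists eta, 0 < eta /\
        forall w', K w' -> d w w' < eta -> h w' i = h w i) /\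
    (forall s : Z -> bool, exists w, K w /\ h w = s) /\
    (forall w, K w -> h (F w) = shift (h w)).

Definition uncountable_set {X : Type} (K : X -> Prop) : Prop :=
  ~ exists s : nat -> X, forall w, K w -> exists n, s n = w.

Definition separated {X : Type} (d : X -> X -> R) (F : X -> X) (K : X -> Prop)
  (n : nat) (eps : R) (E : list X) : Prop :=
  NoDup E /\ (forall a, In a E -> K a) /\
  forall a b, In a E -> In b E -> a <> b ->
    exists j, (j < n)%nat /\ eps < d (Nat.iter j F a) (Nat.iter j F b).

(* h_top(F|_K) >= c, with h_top(F|_K) = lim_{eps->0} limsup_n (1/n) log s(n,eps) *)
Definition entropy_ge {X : Type} (d : X -> X -> R) (F : X -> X) (K : X -> Prop)
  (c : R) : Prop :=
  forall c', c' < c -> exists eps, 0 < eps /\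
    forall n0 : nat, exists n : nat, (n0 <= n)%nat /\ (0 < n)%nat /\
      exists E, separated d F K n eps E /\ c' < ln (INR (length E)) / INR n.

From Pilot Require Import Defs.
From Stdlib Require Import Reals ZArith List Lia Lra Classical ClassicalEpsilon FunctionalExtensionality.
Open Scope R_scope.

(* Given x non-wandering and y whose orbit segment of length n separates from
   that of x (by gamma > eps) while starting and ending delta-close to it, the
   non-wandering property yields a point z near x with f^P z near x again,
   for some P > n, and f^n z near f^n x.  For every s : Z -> bool we
   concatenate, block by block, the orbit segment of length n of x (if s_i is
   true) or of y (if false), followed by the segment f^n z, ..., f^(P-1) z;
   this is a pseudo-orbit, and shadowing gives a true orbit following it.
   The set K of points following some such itinerary within beta = eps/2 is
   closed (hence compact), f^P-invariant and of small dynamical diameter, and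
   reading at time iP + j0 (where x and y are gamma apart) whether the orbit
   is nearer to x or to y is a semi-conjugacy onto the full 2-shift.  Two
   general facts about such codings finish the proof: a coding onto the
   2-shift forces uncountability (Cantor's diagonal argument) and, when the
   zeroth symbol separates points uniformly, entropy at least log 2. *)

Section MetricFacts.
Context {X : Type} (d : X -> X -> R) (Hd : is_metric d).

Lemma d_pos x y : 0 <= d x y.
Proof. destruct Hd as [H _]. apply H. Qed.

Lemma d_self x : d x x = 0.
Proof. destruct Hd as [_ [H _]]. apply H. reflexivity. Qed.

Lemma d_sym x y : d x y = d y x.
Proof. destruct Hd as [_ [_ [H _]]]. apply H. Qed.

Lemma d_tri x y z : d x z <= d x y + d y z.
Proof. destruct Hd as [_ [_ [_ H]]]. apply H. Qed.

Lemma d_pos_of_neq x y : x <> y -> 0 < d x y.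
Proof.
  intro Hne. destruct (d_pos x y) as [Hlt | Heq]; auto.
  exfalso. apply Hne. destruct Hd as [_ [H _]]. apply H. auto.
Qed.

Lemma ball_open c r : is_open d (fun y => d c y < r).
Proof.
  intros b Hb. exists (r - d c b). split; [lra |].
  intros y Hy. pose proof (d_tri c b y). lra.
Qed.

Lemma far_open (F : X -> X) c b :
  continuous d F -> is_open d (fun w => b < d (F w) c).
Proof.
  intros HF w Hw. destruct (HF w (d (F w) c - b)) as [r [Hr H]]; [lra |].
  exists r. split; auto. intros w' Hw'. specialize (H w' Hw').
  pose proof (d_tri (F w) (F w') c). lra.
Qed.

Definition closed_set (A : X -> Prop) : Prop := is_open d (fun w => ~ A w).

Lemma closed_dist_le (F : X -> X) c b :
  continuous d F -> closed_set (fun w => d (F w) c <= b).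
Proof.
  intros HF w Hw. destruct (far_open F c b HF w) as [r [Hr H]]; [lra |].
  exists r. split; auto. intros w' Hw'. specialize (H w' Hw'). lra.
Qed.

Lemma closed_forall {I : Type} (A : I -> X -> Prop) :
  (forall i, closed_set (A i)) -> closed_set (fun w => forall i, A i w).
Proof.
  intros HA w Hw. apply not_all_ex_not in Hw as [i Hi].
  destruct (HA i w Hi) as [r [Hr H]]. exists r. split; auto.
  intros w' Hw' Hall. exact (H w' Hw' (Hall i)).
Qed.

Lemma closed_imp (Q : Prop) (A : X -> Prop) :
  (Q -> closed_set A) -> closed_set (fun w => Q -> A w).
Proof.
  intros HA w Hw. apply imply_to_and in Hw as [HQ HAw].
  destruct (HA HQ w HAw) as [r [Hr H]]. exists r. split; auto.
  intros w' Hw' Himp. exact (H w' Hw' (Himp HQ)).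
Qed.

Lemma closed_and (A B : X -> Prop) :
  closed_set A -> closed_set B -> closed_set (fun w => A w /\ B w).
Proof.
  intros HA HB w Hw. apply not_and_or in Hw as [Hw | Hw].
  - destruct (HA w Hw) as [r [Hr H]]. exists r. split; auto.
    intros w' Hw' [Aw' _]. exact (H w' Hw' Aw').
  - destruct (HB w Hw) as [r [Hr H]]. exists r. split; auto.
    intros w' Hw' [_ Bw']. exact (H w' Hw' Bw').
Qed.

Lemma closed_or (A B : X -> Prop) :
  closed_set A -> closed_set B -> closed_set (fun w => A w \/ B w).
Proof.
  intros HA HB w Hw. apply not_or_and in Hw as [HnA HnB].
  destruct (HA w HnA) as [r1 [Hr1 H1]]. destruct (HB w HnB) as [r2 [Hr2 H2]].
  exists (Rmin r1 r2). split; [apply Rmin_glb_lt; auto |].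
  pose proof (Rmin_l r1 r2). pose proof (Rmin_r r1 r2).
  intros w' Hw' [Aw' | Bw']; [apply (H1 w') | apply (H2 w')]; auto; lra.
Qed.

(* A closed subset of a compact space is compact: adjoin its complement to
   any open cover of it. *)
Lemma closed_compact (K : X -> Prop) :
  compact_space d -> closed_set K -> compact_set d K.
Proof.
  intros Hc Ho J U HU Hcov.
  destruct (Hc (option J)
              (fun o => match o with Some i => U i | None => fun w => ~ K w end))
    as [l Hl].
  - intros [i |]; auto.
  - intros w _. destruct (classic (K w)) as [Kw | nKw].
    + destruct (Hcov w Kw) as [i Hi]. exists (Some i). auto.
    + exists None. auto.
  - exists (flat_map (fun o => match o with Some i => i :: nil | None => nil end) l).
    intros w Kw. destruct (Hl w Logic.I) as [[i |] [Hin Hu]]; [| contradiction].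
    exists i. split; auto. apply in_flat_map. exists (Some i). simpl. auto.
Qed.

(* Continuous maps of a compact metric space are uniformly continuous: cover
   the space by balls of half the radius given by pointwise continuity and
   take the least radius of a finite subcover. *)
Lemma uniform_continuity (F : X -> X) :
  compact_space d -> continuous d F ->
  forall e, 0 < e -> exists del, 0 < del /\
    forall a b, d a b < del -> d (F a) (F b) < e.
Proof.
  intros Hc HF e He.
  set (I := {p : X * R | 0 < snd p /\
              forall y, d (fst p) y < 2 * snd p -> d (F (fst p)) (F y) < e / 2}).
  destruct (Hc I (fun p y => d (fst (proj1_sig p)) y < snd (proj1_sig p))) as [l Hl].
  - intros p. apply ball_open.
  - intros b _. destruct (HF b (e / 2)) as [t [Ht Htt]]; [lra |].
    assert (Hp : 0 < snd (b, t / 2) /\ forall y, d (fst (b, t / 2)) y < 2 * snd (b, t / 2) ->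
                   d (F (fst (b, t / 2))) (F y) < e / 2).
    { simpl. split; [lra |]. intros y Hy. apply Htt. lra. }
    exists (exist _ (b, t / 2) Hp). simpl. rewrite d_self. lra.
  - assert (Hmin : exists m, 0 < m /\ forall p, In p l -> m <= snd (proj1_sig p)).
    { clear Hl. induction l as [| p l IH].
      - exists 1. split; [lra |]. intros p [].
      - destruct IH as [m [Hm Hm']]. exists (Rmin m (snd (proj1_sig p))). split.
        + apply Rmin_glb_lt; auto. apply (proj2_sig p).
        + intros q [<- | Hq]; [apply Rmin_r |]. eapply Rle_trans; [apply Rmin_l | auto]. }
    destruct Hmin as [m [Hm Hm']]. exists m. split; auto.
    intros a b Hab. destruct (Hl a Logic.I) as [p [Hin Hp]].
    specialize (Hm' p Hin). destruct p as [[c r] [Hr Hcr]]. simpl in *.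
    assert (d (F c) (F a) < e / 2) by (apply Hcr; lra).
    assert (d (F c) (F b) < e / 2) by (apply Hcr; pose proof (d_tri c a b); lra).
    pose proof (d_tri (F a) (F c) (F b)). rewrite (d_sym (F a) (F c)) in *. lra.
Qed.

End MetricFacts.

Section Continuity.
Context {X : Type} (d : X -> X -> R).

Lemma continuous_comp (F G : X -> X) :
  continuous d F -> continuous d G -> continuous d (fun x => F (G x)).
Proof.
  intros HF HG x e He. destruct (HF (G x) e He) as [d1 [Hd1 H1]].
  destruct (HG x d1 Hd1) as [d2 [Hd2 H2]]. exists d2. split; auto.
Qed.

Lemma continuous_iter (F : X -> X) :
  continuous d F -> forall m, continuous d (Nat.iter m F).
Proof.
  intros HF m. induction m as [| m IH]; simpl.
  - intros x e He. exists e. split; auto.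
  - apply (continuous_comp F (Nat.iter m F)); auto.
Qed.

End Continuity.

Section IntegerIterates.
Context {X : Type} (d : X -> X -> R) (f g : X -> X) (Hf : homeo_with_inverse d f g).

Lemma zpow_split k u :
  zpow f g k u = Nat.iter (Z.to_nat k) f (Nat.iter (Z.to_nat (- k)) g u).
Proof. destruct k; reflexivity. Qed.

Lemma zpow_nat m u : zpow f g (Z.of_nat m) u = Nat.iter m f u.
Proof.
  rewrite zpow_split, Nat2Z.id. replace (Z.to_nat (- Z.of_nat m)) with 0%nat by lia.
  reflexivity.
Qed.

(* Every integer iterate f^k = f^(k+) o g^(k-) is continuous. *)
Lemma zpow_continuous k : continuous d (zpow f g k).
Proof.
  destruct Hf as [Hfc [Hgc _]].
  assert (E : zpow f g k = fun u => Nat.iter (Z.to_nat k) f (Nat.iter (Z.to_nat (- k)) g u)).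
  { apply functional_extensionality. intro u. apply zpow_split. }
  rewrite E. apply continuous_comp; apply continuous_iter; auto.
Qed.

Lemma zpow_succ k u : zpow f g (Z.succ k) u = f (zpow f g k u).
Proof.
  destruct Hf as [_ [_ [_ Hfg]]]. rewrite !zpow_split.
  destruct (Z_le_gt_dec 0 k).
  - replace (Z.to_nat (Z.succ k)) with (S (Z.to_nat k)) by lia.
    replace (Z.to_nat (- Z.succ k)) with 0%nat by lia.
    replace (Z.to_nat (- k)) with 0%nat by lia. reflexivity.
  - replace (Z.to_nat (Z.succ k)) with 0%nat by lia.
    replace (Z.to_nat k) with 0%nat by lia.
    replace (Z.to_nat (- k)) with (S (Z.to_nat (- Z.succ k))) by lia.
    simpl. rewrite Hfg. reflexivity.
Qed.

Lemma zpow_pred k u : zpow f g (Z.pred k) u = g (zpow f g k u).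
Proof.
  rewrite <- (Z.succ_pred k) at 2. rewrite zpow_succ.
  destruct Hf as [_ [_ [Hgf _]]]. rewrite Hgf. reflexivity.
Qed.

Lemma zpow_add a b u : zpow f g a (zpow f g b u) = zpow f g (a + b) u.
Proof.
  revert b u. induction a as [| a IH | a IH] using Z.peano_ind; intros b u.
  - reflexivity.
  - rewrite zpow_succ, IH. replace (Z.succ a + b)%Z with (Z.succ (a + b)) by lia.
    rewrite zpow_succ. reflexivity.
  - rewrite zpow_pred, IH. replace (Z.pred a + b)%Z with (Z.pred (a + b)) by lia.
    rewrite zpow_pred. reflexivity.
Qed.

End IntegerIterates.

Section Returns.
Context {X : Type} (d : X -> X -> R) (Hd : is_metric d) (f : X -> X) (Hf : continuous d f).

Lemma nonfixed_repels (F : X -> X) x :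
  continuous d F -> F x <> x ->
  exists t, 0 < t /\ forall a, d x a < t -> t <= d x (F a).
Proof.
  intros HF Hne. set (c := d x (F x)).
  assert (Hc : 0 < c) by (apply (d_pos_of_neq d Hd); auto).
  destruct (HF x (c / 2)) as [t [Ht Htt]]; [lra |].
  exists (Rmin t (c / 2)). split; [apply Rmin_glb_lt; lra |].
  intros a Ha. pose proof (Rmin_l t (c / 2)). pose proof (Rmin_r t (c / 2)).
  specialize (Htt a ltac:(lra)).
  pose proof (d_tri d Hd x (F a) (F x)) as Htri.
  rewrite (d_sym d Hd (F a) (F x)) in Htri. fold c in Htri. lra.
Qed.

Lemma no_short_return x n :
  (forall j, (1 <= j < n)%nat -> Nat.iter j f x <> x) ->
  exists t, 0 < t /\ forall j a, (1 <= j < n)%nat -> d x a < t -> t <= d x (Nat.iter j f a).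
Proof.
  induction n as [| n IH]; intros Hper.
  - exists 1. split; [lra |]. intros j a Hj. lia.
  - destruct IH as [t1 [Ht1 H1]]; [intros j Hj; apply Hper; lia |].
    destruct (Nat.eq_dec n 0) as [-> | Hn].
    + exists t1. split; auto. intros j a Hj. lia.
    + destruct (nonfixed_repels (Nat.iter n f) x (continuous_iter d f Hf n))
        as [t2 [Ht2 H2]]; [apply Hper; lia |].
      exists (Rmin t1 t2). split; [apply Rmin_glb_lt; auto |].
      pose proof (Rmin_l t1 t2). pose proof (Rmin_r t1 t2).
      intros j a Hj Ha. destruct (Nat.eq_dec j n) as [-> | Hjn].
      * specialize (H2 a ltac:(lra)). lra.
      * specialize (H1 j a ltac:(lia) ltac:(lra)). lra.
Qed.

Lemma iter_periodic x k : Nat.iter k f x = x -> forall q, Nat.iter (q * k) f x = x.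
Proof.
  intros Hk q. induction q as [| q IH]; simpl; auto. rewrite Nat.iter_add, IH. auto.
Qed.

Lemma late_return x n :
  nonwandering d f x -> forall eta, 0 < eta ->
  exists z m, (n <= m)%nat /\ d x z < eta /\ d x (Nat.iter m f z) < eta.
Proof.
  intros Hnw eta Heta.
  destruct (classic (exists k, (1 <= k < n)%nat /\ Nat.iter k f x = x))
    as [[k [Hk Hkx]] | Hno].
  - exists x, (n * k)%nat. split; [nia |].
    rewrite (iter_periodic x k Hkx n), (d_self d Hd). lra.
  - destruct (no_short_return x n) as [t [Ht Hfar]].
    { intros j Hj Hjx. apply Hno. eauto. }
    destruct (Hnw (fun y => d x y < Rmin t eta)) as [k [Hk [z [Hz Hkz]]]].
    { apply ball_open; auto. }
    { rewrite (d_self d Hd). apply Rmin_glb_lt; auto. }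
    pose proof (Rmin_l t eta). pose proof (Rmin_r t eta).
    exists z, k. split; [| split; lra].
    destruct (le_lt_dec n k) as [? | Hlt]; auto.
    specialize (Hfar k z ltac:(lia) ltac:(lra)). lra.
Qed.

End Returns.

Fixpoint bit_words (m : nat) : list (list bool) :=
  match m with
  | O => nil :: nil
  | S m => map (cons true) (bit_words m) ++ map (cons false) (bit_words m)
  end.

Lemma bit_words_length m t : In t (bit_words m) -> length t = m.
Proof.
  revert t. induction m as [| m IH]; simpl; intros t Ht.
  - destruct Ht as [<- | []]. reflexivity.
  - apply in_app_or in Ht as [Ht | Ht]; apply in_map_iff in Ht as [t' [<- Ht']];
      simpl; rewrite IH; auto.
Qed.

Lemma bit_words_count m : length (bit_words m) = (2 ^ m)%nat.
Proof. induction m; simpl; auto. rewrite length_app, !length_map, IHm. lia. Qed.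

Lemma bit_words_nodup m : NoDup (bit_words m).
Proof.
  induction m as [| m IH]; simpl.
  - constructor; [intros [] | constructor].
  - assert (Hcons : forall b, NoDup (map (cons b) (bit_words m))).
    { intro b. apply NoDup_map_NoDup_ForallPairs; auto.
      intros a a' _ _ E. inversion E. auto. }
    apply NoDup_app; auto.
    intros a H1 H2. apply in_map_iff in H1 as [? [<- _]].
    apply in_map_iff in H2 as [? [E _]]. discriminate.
Qed.

Lemma bit_words_differ m t t' :
  In t (bit_words m) -> In t' (bit_words m) -> t <> t' ->
  exists k, (k < m)%nat /\ nth k t false <> nth k t' false.
Proof.
  intros Ht Ht' Hne. apply NNPP. intro Hsame. apply Hne.
  apply (nth_ext _ _ false false).
  - rewrite (bit_words_length _ _ Ht), (bit_words_length _ _ Ht'). reflexivity.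
  - intros k Hk. rewrite (bit_words_length _ _ Ht) in Hk.
    apply NNPP. intro Hk'. apply Hsame. eauto.
Qed.

Definition word_seq (t : list bool) (i : Z) : bool := nth (Z.to_nat i) t false.

Section ShiftCoding.
Context {X : Type} (d : X -> X -> R) (F : X -> X) (K : X -> Prop) (h : X -> Z -> bool).
Hypothesis coding_onto : forall s, exists w, K w /\ h w = s.

(* A set coded onto {0,1}^Z is uncountable: Cantor's diagonal argument. *)
Lemma uncountable_of_coding : uncountable_set K.
Proof.
  intros [e He]. destruct (coding_onto (fun i => negb (h (e (Z.to_nat i)) i))) as [w [Kw Hw]].
  destruct (He w Kw) as [m Hm].
  assert (E := f_equal (fun s => s (Z.of_nat m)) Hw). simpl in E.
  rewrite Nat2Z.id, Hm in E. destruct (h w (Z.of_nat m)); discriminate.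
Qed.

Hypothesis K_invariant : forall w, K w -> K (F w).
Hypothesis coding_shift : forall w, K w -> h (F w) = Defs.shift (h w).

Lemma coding_iter k w :
  K w -> K (Nat.iter k F w) /\ h (Nat.iter k F w) 0%Z = h w (Z.of_nat k).
Proof.
  intro Kw. assert (Hgen : K (Nat.iter k F w) /\
                           forall i, h (Nat.iter k F w) i = h w (i + Z.of_nat k)).
  { induction k as [| k [IHK IHh]]; simpl.
    - split; auto. intro i. f_equal. lia.
    - split; auto. intro i. rewrite coding_shift by auto. unfold Defs.shift.
      rewrite IHh. f_equal. lia. }
  destruct Hgen as [HK Hh]. split; auto.
Qed.

Hypothesis Hd : is_metric d.

(* If the zeroth symbol of the coding separates points of K uniformly, the
   2^n words of length n give (n, c/2)-separated sets, so the entropy of F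
   on K is at least log 2. *)
Lemma entropy_of_coding c :
  0 < c -> (forall a b, K a -> K b -> h a 0%Z <> h b 0%Z -> c <= d a b) ->
  entropy_ge d F K (ln 2).
Proof.
  intros Hc Hsep c' Hc'. exists (c / 2). split; [lra |]. intro n0.
  set (m := Nat.max n0 1). exists m. split; [lia |]. split; [lia |].
  set (pick := fun t => proj1_sig (constructive_indefinite_description _ (coding_onto (word_seq t)))).
  assert (Hpick : forall t, K (pick t) /\ h (pick t) = word_seq t).
  { intro t. unfold pick. destruct (constructive_indefinite_description _ _). auto. }
  assert (Hsymbol : forall t k, h (pick t) (Z.of_nat k) = nth k t false).
  { intros t k. rewrite (proj2 (Hpick t)). unfold word_seq. rewrite Nat2Z.id. auto. }
  assert (Hfar : forall t t', In t (bit_words m) -> In t' (bit_words m) -> t <> t' ->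
            exists k, (k < m)%nat /\ c / 2 < d (Nat.iter k F (pick t)) (Nat.iter k F (pick t'))).
  { intros t t' Ht Ht' Hne. destruct (bit_words_differ m t t' Ht Ht' Hne) as [k [Hk Hdiff]].
    exists k. split; auto.
    destruct (coding_iter k (pick t) (proj1 (Hpick t))) as [K1 H1].
    destruct (coding_iter k (pick t') (proj1 (Hpick t'))) as [K2 H2].
    assert (c <= d (Nat.iter k F (pick t)) (Nat.iter k F (pick t'))); [| lra].
    apply Hsep; auto. rewrite H1, H2, !Hsymbol. auto. }
  exists (map pick (bit_words m)). split; [split; [| split] |].
  - apply NoDup_map_NoDup_ForallPairs; [| apply bit_words_nodup].
    intros t t' Ht Ht' E. apply NNPP. intro Hne.
    destruct (Hfar t t' Ht Ht' Hne) as [k [_ Hk]]. rewrite E, (d_self d Hd) in Hk. lra.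
  - intros a Ha. apply in_map_iff in Ha as [t [<- _]]. apply Hpick.
  - intros a b Ha Hb Hab. apply in_map_iff in Ha as [t [<- Ht]].
    apply in_map_iff in Hb as [t' [<- Ht']].
    apply Hfar; auto. intros ->. auto.
  - rewrite length_map, bit_words_count, pow_INR.
    replace (INR 2) with 2 by (simpl; lra). rewrite ln_pow by lra.
    assert (0 < INR m) by (apply lt_0_INR; lia). field_simplify; lra.
Qed.

End ShiftCoding.

Section Horseshoe.
Context {X : Type} (d : X -> X -> R) (f g : X -> X).
Hypothesis Hd : is_metric d.
Hypothesis Hf : homeo_with_inverse d f g.

(* The data: the orbit segments of length n of x and y stay within gam of
   each other and are gam apart at time j0; z shadows x from time n on and
   f^P z returns near x, with P > n; the four closeness conditions allow a
   jump between consecutive blocks of less than 2 rho, which shadowing turns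
   into a true orbit within beta. *)
Variables (x y z : X) (n P j0 : nat) (beta gam rho : R).
Hypothesis HnP : (n < P)%nat.
Hypothesis Hj0 : (j0 < n)%nat.
Hypothesis Hgam : forall j, (j < n)%nat -> d (Nat.iter j f x) (Nat.iter j f y) <= gam.
Hypothesis Hgam0 : d (Nat.iter j0 f x) (Nat.iter j0 f y) = gam.
Hypothesis Hbeta : 2 * beta < gam.
Hypothesis Hxy0 : d x y < rho.
Hypothesis Hxyn : d (Nat.iter n f x) (Nat.iter n f y) < rho.
Hypothesis Hzn : d (Nat.iter n f x) (Nat.iter n f z) < rho.
Hypothesis HzP : d x (Nat.iter P f z) < rho.
Hypothesis Hsh : forall xs : Z -> X, (forall k, d (f (xs k)) (xs (k + 1)%Z) < 2 * rho) ->
  exists w, forall k, d (zpow f g k w) (xs k) < beta.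

Let Pz := Z.of_nat P.

Definition block_pt (w : X) (i : Z) (j : nat) : X := zpow f g (i * Pz + Z.of_nat j) w.

Definition code_pt (b : bool) : X := if b then x else y.

Definition model_pt (b : bool) (j : nat) : X :=
  Nat.iter j f (if (j <? n)%nat then code_pt b else z).

Definition pseudo_orbit (s : Z -> bool) (k : Z) : X :=
  model_pt (s (k / Pz)%Z) (Z.to_nat (k mod Pz)).

Lemma block_decomp k : exists i j, (j < P)%nat /\ k = (i * Pz + Z.of_nat j)%Z.
Proof.
  assert (HP : (0 < Pz)%Z) by (unfold Pz; lia).
  exists (k / Pz)%Z, (Z.to_nat (k mod Pz)).
  pose proof (Z.mod_pos_bound k Pz HP). pose proof (Z_div_mod_eq_full k Pz).
  split; [unfold Pz in *; lia | rewrite Z2Nat.id; lia].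
Qed.

Lemma pseudo_orbit_at s i j :
  (j < P)%nat -> pseudo_orbit s (i * Pz + Z.of_nat j) = model_pt (s i) j.
Proof.
  intro Hj. unfold pseudo_orbit.
  replace ((i * Pz + Z.of_nat j) / Pz)%Z with i
    by (apply (Z.div_unique _ _ _ (Z.of_nat j)); unfold Pz in *; lia).
  rewrite <- (Z.mod_unique (i * Pz + Z.of_nat j) Pz i (Z.of_nat j)) by (unfold Pz; lia).
  rewrite Nat2Z.id. reflexivity.
Qed.

Lemma block_pt_shift w e i j :
  block_pt (zpow f g (e * Pz) w) i j = block_pt w (i + e) j.
Proof.
  unfold block_pt. rewrite (zpow_add d f g Hf). f_equal. lia.
Qed.

Lemma rho_pos : 0 < rho.
Proof. pose proof (d_pos d Hd x y). lra. Qed.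

Lemma code_pt_near b : d x (code_pt b) < rho.
Proof. pose proof rho_pos. destruct b; simpl; auto. rewrite (d_self d Hd). lra. Qed.

Lemma code_pt_near_n b : d (Nat.iter n f (code_pt b)) (Nat.iter n f x) < rho.
Proof.
  pose proof rho_pos. destruct b; simpl; [rewrite (d_self d Hd); lra |].
  rewrite (d_sym d Hd). auto.
Qed.

(* Consecutive points of the pseudo-orbit are 2 rho-close: the only jumps
   are at time n inside a block (via f^n x) and between blocks (via x). *)
Lemma pseudo_orbit_step s k : d (f (pseudo_orbit s k)) (pseudo_orbit s (k + 1)) < 2 * rho.
Proof.
  pose proof rho_pos. destruct (block_decomp k) as [i [j [Hj ->]]].
  destruct (Nat.eq_dec (S j) P) as [HjP | HjP].
  - replace (i * Pz + Z.of_nat j + 1)%Z with ((i + 1) * Pz + Z.of_nat 0)%Z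
      by (unfold Pz; lia).
    rewrite !pseudo_orbit_at by lia. unfold model_pt.
    replace (j <? n)%nat with false by (symmetry; apply Nat.ltb_ge; lia).
    replace (0 <? n)%nat with true by (symmetry; apply Nat.ltb_lt; lia).
    change (f (Nat.iter j f z)) with (Nat.iter (S j) f z). rewrite HjP. simpl.
    pose proof (d_tri d Hd (Nat.iter P f z) x (code_pt (s (i + 1)%Z))).
    pose proof (code_pt_near (s (i + 1)%Z)). rewrite (d_sym d Hd _ x) in *. lra.
  - replace (i * Pz + Z.of_nat j + 1)%Z with (i * Pz + Z.of_nat (S j))%Z by lia.
    rewrite !pseudo_orbit_at by lia. unfold model_pt.
    change (f (Nat.iter j f ?p)) with (Nat.iter (S j) f p).
    destruct (Nat.ltb_spec j n); destruct (Nat.ltb_spec (S j) n);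
      try (rewrite (d_self d Hd); lra); [| lia].
    replace (S j) with n by lia.
    pose proof (d_tri d Hd (Nat.iter n f (code_pt (s i))) (Nat.iter n f x) (Nat.iter n f z)).
    pose proof (code_pt_near_n (s i)). lra.
Qed.

Definition follows (w : X) (i : Z) (p : X) : Prop :=
  forall j, (j < n)%nat -> d (block_pt w i j) (Nat.iter j f p) <= beta.

Definition horseshoe (w : X) : Prop :=
  forall i : Z,
    (forall j, (n <= j < P)%nat -> d (block_pt w i j) (Nat.iter j f z) <= beta) /\
    (follows w i x \/ follows w i y).

Definition coding (w : X) (i : Z) : bool :=
  if Rlt_dec (d (block_pt w i j0) (Nat.iter j0 f x)) (d (block_pt w i j0) (Nat.iter j0 f y))
  then true else false.

Lemma coding_follows_x w i : follows w i x -> coding w i = true.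
Proof.
  intro Hx. specialize (Hx j0 Hj0). unfold coding. destruct (Rlt_dec _ _); auto.
  pose proof (d_tri d Hd (Nat.iter j0 f x) (block_pt w i j0) (Nat.iter j0 f y)).
  rewrite (d_sym d Hd _ (block_pt w i j0)) in *. lra.
Qed.

Lemma coding_follows_y w i : follows w i y -> coding w i = false.
Proof.
  intro Hy. specialize (Hy j0 Hj0). unfold coding. destruct (Rlt_dec _ _); auto.
  pose proof (d_tri d Hd (Nat.iter j0 f x) (block_pt w i j0) (Nat.iter j0 f y)).
  rewrite (d_sym d Hd _ (block_pt w i j0)) in *. lra.
Qed.

Lemma coding_separates a b i :
  horseshoe a -> horseshoe b -> coding a i <> coding b i ->
  gam - 2 * beta <= d (block_pt a i j0) (block_pt b i j0).
Proof.
  intros Ka Kb Hne. set (pa := block_pt a i j0). set (pb := block_pt b i j0).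
  assert (Hgap : forall p q, follows a i p -> follows b i q ->
            d (Nat.iter j0 f p) (Nat.iter j0 f q) = gam ->
            gam - 2 * beta <= d pa pb).
  { intros p q Hp Hq E. specialize (Hp j0 Hj0). specialize (Hq j0 Hj0). fold pa pb in Hp, Hq.
    pose proof (d_tri d Hd (Nat.iter j0 f p) pa (Nat.iter j0 f q)).
    pose proof (d_tri d Hd pa pb (Nat.iter j0 f q)).
    rewrite (d_sym d Hd _ pa), (d_sym d Hd pb) in *. lra. }
  destruct (proj2 (Ka i)) as [Ha | Ha]; destruct (proj2 (Kb i)) as [Hb | Hb].
  - rewrite (coding_follows_x _ _ Ha), (coding_follows_x _ _ Hb) in Hne. congruence.
  - exact (Hgap _ _ Ha Hb Hgam0).
  - apply (Hgap _ _ Ha Hb). rewrite (d_sym d Hd). exact Hgam0.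
  - rewrite (coding_follows_y _ _ Ha), (coding_follows_y _ _ Hb) in Hne. congruence.
Qed.

(* Shadowing the pseudo-orbit of s yields a point of the horseshoe coded by s. *)
Lemma horseshoe_onto s : exists w, horseshoe w /\ coding w = s.
Proof.
  destruct (Hsh (pseudo_orbit s) (pseudo_orbit_step s)) as [w Hw].
  assert (Hblock : forall i j, (j < P)%nat -> d (block_pt w i j) (model_pt (s i) j) < beta).
  { intros i j Hj. rewrite <- pseudo_orbit_at by auto. apply Hw. }
  assert (Hcode : forall i, follows w i (code_pt (s i))).
  { intros i j Hj. specialize (Hblock i j ltac:(lia)). unfold model_pt in Hblock.
    replace (j <? n)%nat with true in Hblock by (symmetry; apply Nat.ltb_lt; auto). lra. }
  exists w. split.
  - intro i. split.
    + intros j Hj. specialize (Hblock i j ltac:(lia)). unfold model_pt in Hblock.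
      replace (j <? n)%nat with false in Hblock by (symmetry; apply Nat.ltb_ge; lia). lra.
    + specialize (Hcode i). destruct (s i); auto.
  - apply functional_extensionality. intro i. specialize (Hcode i).
    destruct (s i); [apply coding_follows_x | apply coding_follows_y]; auto.
Qed.

Lemma horseshoe_shift w e : horseshoe w -> horseshoe (zpow f g (e * Pz) w).
Proof.
  intros Kw i. destruct (Kw (i + e)%Z) as [Hz Hxy]. unfold follows in *. split.
  - intros j Hj. rewrite block_pt_shift. auto.
  - destruct Hxy as [H | H]; [left | right]; intros j Hj; rewrite block_pt_shift; auto.
Qed.

Lemma coding_shift w e i : coding (zpow f g (e * Pz) w) i = coding w (i + e).
Proof. unfold coding. rewrite block_pt_shift. reflexivity. Qed.

(* Along the orbits of two horseshoe points, both are within beta of points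
   of x, y or z that are gam-close, so they stay 2 gam-close. *)
Lemma horseshoe_diam k a b :
  horseshoe a -> horseshoe b -> d (zpow f g k a) (zpow f g k b) <= 2 * gam.
Proof.
  intros Ka Kb. destruct (block_decomp k) as [i [j [Hj ->]]].
  change (zpow f g (i * Pz + Z.of_nat j) a) with (block_pt a i j).
  change (zpow f g (i * Pz + Z.of_nat j) b) with (block_pt b i j).
  assert (Hclose : forall p q, d (block_pt a i j) p <= beta -> d (block_pt b i j) q <= beta ->
            d p q <= gam -> d (block_pt a i j) (block_pt b i j) <= 2 * gam).
  { intros p q Hp Hq Hpq. pose proof (d_tri d Hd (block_pt a i j) p (block_pt b i j)).
    pose proof (d_tri d Hd p q (block_pt b i j)). rewrite (d_sym d Hd q) in *. lra. }
  assert (Hgam_pos : 0 <= gam) by (rewrite <- Hgam0; apply (d_pos d Hd)).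
  destruct (le_lt_dec n j) as [Hnj | Hnj].
  - apply (Hclose (Nat.iter j f z) (Nat.iter j f z));
      [apply (proj1 (Ka i)) | apply (proj1 (Kb i)) | rewrite (d_self d Hd)]; lra || lia.
  - destruct (proj2 (Ka i)) as [Ha | Ha]; destruct (proj2 (Kb i)) as [Hb | Hb];
      apply (Hclose _ _ (Ha j Hnj) (Hb j Hnj)); try (rewrite (d_self d Hd); lra).
    + apply Hgam; auto.
    + rewrite (d_sym d Hd). apply Hgam; auto.
Qed.

Lemma horseshoe_closed : closed_set d horseshoe.
Proof.
  assert (Hpt : forall i j p, closed_set d (fun w => d (block_pt w i j) p <= beta)).
  { intros i j p. apply (closed_dist_le d Hd). apply (zpow_continuous d f g Hf). }
  apply closed_forall. intro i. apply (closed_and d).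
  - apply closed_forall. intro j. apply closed_imp. auto.
  - apply (closed_or d); apply closed_forall; intro j; apply closed_imp; auto.
Qed.

Lemma iter_P_zpow w : Nat.iter P f w = zpow f g (1 * Pz) w.
Proof. rewrite <- (zpow_nat f g P). f_equal. unfold Pz. lia. Qed.

Lemma horseshoe_invariant v : horseshoe v <-> exists w, horseshoe w /\ Nat.iter P f w = v.
Proof.
  split.
  - intro Kv. exists (zpow f g (-1 * Pz) v). split; [apply horseshoe_shift; auto |].
    rewrite iter_P_zpow, (zpow_add d f g Hf).
    replace (1 * Pz + -1 * Pz)%Z with 0%Z by lia. reflexivity.
  - intros [w [Kw <-]]. rewrite iter_P_zpow. apply horseshoe_shift. auto.
Qed.

Lemma coding_iter_P w : coding (Nat.iter P f w) = Defs.shift (coding w).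
Proof.
  apply functional_extensionality. intro i. rewrite iter_P_zpow, coding_shift. reflexivity.
Qed.

(* The coding is continuous: each symbol is locally constant on the
   horseshoe, since differing symbols force a gap at a fixed time. *)
Lemma coding_locally_constant w i :
  horseshoe w -> exists r, 0 < r /\
    forall w', horseshoe w' -> d w w' < r -> coding w' i = coding w i.
Proof.
  intro Kw. destruct (zpow_continuous d f g Hf (i * Pz + Z.of_nat j0) w (gam - 2 * beta))
    as [r [Hr Hcont]]; [lra |].
  exists r. split; auto. intros w' Kw' Hww'.
  destruct (Bool.bool_dec (coding w' i) (coding w i)) as [? | Hne]; auto.
  pose proof (coding_separates w w' i Kw Kw' (fun E => Hne (eq_sym E))).
  specialize (Hcont w' Hww'). unfold block_pt in *. lra.
Qed.

Hypothesis Hc : compact_space d.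

(* By uniform continuity of f^j0, the zeroth symbol separates horseshoe
   points by a uniform positive distance. *)
Lemma coding_separates_uniformly : exists c, 0 < c /\
  forall a b, horseshoe a -> horseshoe b -> coding a 0%Z <> coding b 0%Z -> c <= d a b.
Proof.
  destruct (uniform_continuity d Hd (Nat.iter j0 f) Hc (continuous_iter d f (proj1 Hf) j0)
              (gam - 2 * beta)) as [c [Hc0 Hunif]]; [lra |].
  exists c. split; auto. intros a b Ka Kb Hne.
  pose proof (coding_separates a b 0 Ka Kb Hne) as Hgap. unfold block_pt in Hgap.
  rewrite Z.mul_0_l, Z.add_0_l, !zpow_nat in Hgap.
  destruct (Rle_lt_dec c (d a b)) as [? | Hlt]; auto. specialize (Hunif a b Hlt). lra.
Qed.

Lemma horseshoe_properties : exists (N : nat) (K : X -> Prop),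
  (1 <= N)%nat /\
  compact_set d K /\
  (forall k : Z, forall a b, K a -> K b -> d (zpow f g k a) (zpow f g k b) <= 2 * gam) /\
  (forall v, K v <-> exists w, K w /\ Nat.iter N f w = v) /\
  semiconj_full_shift d (Nat.iter N f) K /\
  uncountable_set K /\
  entropy_ge d (Nat.iter N f) K (ln 2).
Proof.
  exists P, horseshoe.
  split; [lia |]. split; [apply (closed_compact d); auto; apply horseshoe_closed |].
  split; [apply horseshoe_diam |]. split; [apply horseshoe_invariant |].
  split; [| split].
  - exists coding. split; [| split].
    + intros w i Kw. apply coding_locally_constant. auto.
    + apply horseshoe_onto.
    + intros w _. apply coding_iter_P.
  - apply uncountable_of_coding with (h := coding). apply horseshoe_onto.
  - destruct coding_separates_uniformly as [c [Hc0 Hsep]].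
    apply (entropy_of_coding d _ horseshoe coding horseshoe_onto) with (c := c); auto.
    + intros w Kw. apply horseshoe_invariant. eauto.
    + intros w _. apply coding_iter_P.
Qed.

End Horseshoe.

Theorem mainTheorem11 (X : Type) (d : X -> X -> R) (f g : X -> X)
  (Hd : is_metric d) (Hc : compact_space d) (Hf : homeo_with_inverse d f g)
  (Hsh : shadowing d f g) :
  forall eps, 0 < eps -> exists del, 0 < del /\
    forall (x y : X) (n : nat) (gamma : R),
      nonwandering d f x -> (0 < n)%nat ->
      (forall k, (k < n)%nat -> d (Nat.iter k f x) (Nat.iter k f y) <= gamma) ->
      (exists k, (k < n)%nat /\ d (Nat.iter k f x) (Nat.iter k f y) = gamma) ->
      eps < gamma ->
      d x y < del -> d (Nat.iter n f x) (Nat.iter n f y) < del ->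
      exists (N : nat) (K : X -> Prop),
        (1 <= N)%nat /\
        compact_set d K /\
        (forall k : Z, forall a b, K a -> K b ->
            d (zpow f g k a) (zpow f g k b) <= 2 * gamma) /\
        (forall z, K z <-> exists w, K w /\ Nat.iter N f w = z) /\
        semiconj_full_shift d (Nat.iter N f) K /\
        uncountable_set K /\
        entropy_ge d (Nat.iter N f) K (ln 2).
Proof.
  intros eps Heps.
  (* Pseudo-orbits with jumps below ds are eps/2-shadowed; del = ds/2. *)
  destruct (Hsh (eps / 2)) as [ds [Hds Hshadow]]; [lra |].
  exists (ds / 2). split; [lra |].
  intros x y n gamma Hnw Hn Hle [j0 [Hj0 Hgamma]] Hepsg Hxy Hxyn.
  (* Choose z near x, returning near x after P > n steps, with f^n z near f^n x. *)
  destruct (continuous_iter d f (proj1 Hf) n x (ds / 2)) as [th [Hth Hnear]]; [lra |].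
  destruct (late_return d Hd f (proj1 Hf) x (S n) Hnw (Rmin th (ds / 2)))
    as [z [P [HP [Hz HzP]]]]; [apply Rmin_glb_lt; lra |].
  pose proof (Rmin_l th (ds / 2)). pose proof (Rmin_r th (ds / 2)).
  apply (horseshoe_properties d f g Hd Hf x y z n P j0 (eps / 2) gamma (ds / 2));
    auto; try lia; try lra.
  - apply Hnear. lra.
  - intros xs Hxs. apply Hshadow. intro k. specialize (Hxs k). lra.
Qed.
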